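(* Let $k\geq 2$ and let $G$ and $G'$ be the graphs defined below. Then $Z(G)\leq 4k-2$ and $Z(G')\leq 4k-3$.
   Context: Let $k\geq 2$. Let $H$ be the graph with vertex set $\{0,1,\ldots,3k-2\}$ in which vertex $i$ is adjacent to $k+i,k+i+1,\ldots,2k+i-1$ (indices mod $3k-1$). Let $A$ be a clique with vertices $a_0,\ldots,a_k$, $B$ a coclique (independent set) with vertices $b_0,\ldots,b_k$, and $C$ a coclique with vertices $c_1,\ldots,c_{k-1}$. The graph $G$ is the disjoint union of $H,A,B,C$ together with the following edges: (i) $a_i\sim b_j$ for all $0\leq i,j\leq k$ with $i\neq j$; (ii) $c_i\sim j$ for all $1\leq i\leq k-1$ and $j\in\{0,k,k+1,\ldots,3k-2\}$; (iii) $b_i\sim j$ for all $0\leq i\leq k-1$ and $j\in\{1,\ldots,k-1\}$, and $b_k\sim j$ for all $j\in\{2k,\ldots,3k-2\}$; (iv) $b_i\sim k+i-1$ for $1\leq i\leq k$, and $b_0\sim 0$. ($G$ is $2k$-regular of order $6k$.) Let $X=V(A)\cup V(H)$. The graph $G'$ is obtained from $G$ by Godsil–McKay switching with respect to $X$: for every vertex $y\in V(B)\cup V(C)$ (each such $y$ has exactly $|X|/2$ neighbors in $X$), delete all edges between $y$ and $X$ and join $y$ instead to the $|X|/2$ vertices of $X$ that were not adjacent to $y$ in $G$; all other edges are unchanged. The zero forcing number $Z(\cdot)$ is the minimum size of a set $S$ of vertices such that, if the vertices of $S$ are colored blue and all others white, repeated application of the rule ''a blue vertex with exactly one white neighbor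 forces that neighbor to become blue'' eventually makes every vertex blue. *)

From mathcomp Require Import all_boot.
Set Implicit Arguments. Unset Strict Implicit. Unset Printing Implicit Defensive.

Definition force_step (T : finType) (e : rel T) (S : {set T}) : {set T} :=
  S :|: [set w | [exists v in S,
           [&& e v w, w \notin S & [forall u, (e v u && (u \notin S)) ==> (u == w)]]]].

(* The final blue set obtained from S (the process stabilises after #|T| rounds). *)
Definition force_closure (T : finType) (e : rel T) (S : {set T}) : {set T} :=
  iter #|T| (force_step e) S.

Definition zero_forcing_set (T : finType) (e : rel T) (S : {set T}) : bool :=
  force_closure e S == [set: T].

(* Z(e): minimum size of a zero forcing set (the whole vertex set is one). *)
Definition zero_forcing_number (T : finType) (e : rel T) : nat :=
  \big[minn/#|T|]_(S : {set T} | zero_forcing_set e S) #|S|.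

Definition gm_switch (T : finType) (e : rel T) (X : {set T}) : rel T :=
  fun u v => if (u \in X) != (v \in X) then ~~ e u v else e u v.

(* Vertices:  inl i            = vertex i of H, 0 <= i <= 3k-2
              inr (inl i)      = a_i, 0 <= i <= k
              inr (inr (inl i))= b_i, 0 <= i <= k
              inr (inr (inr i))= c_(i+1), 0 <= i <= k-2  *)
Definition vert (k : nat) : finType :=
  ('I_(3 * k - 1) + ('I_k.+1 + ('I_k.+1 + 'I_(k - 1))))%type.

Definition arcG (k : nat) (x y : vert k) : bool :=
  match x, y with
  | inl i, inl j =>                       (* H: i ~ k+i, ..., 2k+i-1 mod 3k-1 *)
      let n := 3 * k - 1 in
      let d := (j + n - i) %% n in (k <= d) && (d <= 2 * k - 1)
  | inr (inl i), inr (inl j) => i != j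
  | inr (inl i), inr (inr (inl j)) => nat_of_ord i != nat_of_ord j
  | inl j, inr (inr (inr _)) => (nat_of_ord j == 0) || (k <= j)
  | inl j, inr (inr (inl b)) =>
      [|| (b <= k - 1) && (1 <= j <= k - 1),
          (nat_of_ord b == k) && (2 * k <= j <= 3 * k - 2),
          (1 <= b <= k) && (nat_of_ord j == k + b - 1)
        | (nat_of_ord b == 0) && (nat_of_ord j == 0)]
  | _, _ => false
  end.

Definition adjG (k : nat) : rel (vert k) := fun x y => arcG x y || arcG y x.
Arguments adjG k : clear implicits.

Arguments arcG : clear implicits.
Definition XG (k : nat) : {set vert k} :=
  [set x : vert k | match x with inl _ => true | inr (inl _) => true | _ => false end].

Definition adjG' (k : nat) : rel (vert k) := gm_switch (adjG k) (@XG k).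
Arguments adjG' k : clear implicits.

From mathcomp Require Import all_boot all_order zify.
Import Order.TTheory.

(* Both bounds come from explicit zero forcing sets whose forcing chains take
   k + 1 (for G) and k + 2 (for G') rounds.
   In G start from {1, ..., k-1, 2k-1} in H, a_1, ..., a_k, b_0, ..., b_{k-1}
   and c_1, ..., c_{k-2}: b_0 forces 0 and a_k forces a_0; then each b_i forces
   k+i-1 and a_0 forces b_k; once 0, ..., 2k-1+t are blue, vertex t+1 of H
   forces 2k+t (all its neighbours outside H lie in B) and 0 forces c_{k-1}.
   In G' start from {1, ..., k-2} and {k, ..., 2k-2} in H, all of A and all of C:
   after switching, each c_i is adjacent to A and to {1, ..., k-1} in H, so it
   forces k-1, while b_i is the only white neighbour of a_i; then b_k, adjacent
   to a_k and to {0, ..., 2k-2} in H, forces 0, and vertex t of H forces 2k-1+t. *)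

Set Implicit Arguments.
Unset Strict Implicit.
Unset Printing Implicit Defensive.

Section ZeroForcing.
Variables (T : finType) (e : rel T).
Implicit Types S P Q : {set T}.

Definition forces S (v w : T) : Prop :=
  [/\ v \in S, e v w & forall u, e v u -> u \notin S -> u = w].

Lemma subset_force_step S : S \subset force_step e S.
Proof. exact: subsetUl. Qed.

Lemma force_step_mono S1 S2 : S1 \subset S2 -> force_step e S1 \subset force_step e S2.
Proof.
move=> sS12; apply/subsetP => w; rewrite !inE => /orP[/(subsetP sS12) -> // | ].
case/existsP=> v /and4P[vS1 evw _ /forallP onlyw]; case: (w \in S2) => //=.
apply/existsP; exists v; rewrite (subsetP sS12) // evw /=.
apply/forallP => u; apply/implyP => /andP[evu uS2]; apply: (implyP (onlyw u)).
by rewrite evu; apply: contra uS2; apply: (subsetP sS12).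
Qed.

Lemma forces_force_step S v w : forces S v w -> w \in force_step e S.
Proof.
case=> vS evw onlyw; rewrite inE; case wS: (w \in S) => //=; rewrite inE.
apply/existsP; exists v; rewrite vS evw wS /=.
by apply/forallP => u; apply/implyP => /andP[evu uS]; rewrite (onlyw u).
Qed.

Lemma sub_force_step S P :
  (forall w, w \in P -> w \notin S -> exists v, forces S v w) -> P \subset force_step e S.
Proof.
move=> forcedP; apply/subsetP => w wP.
have [wS | /(forcedP w wP)[v /forces_force_step //]] := boolP (w \in S).
exact: subsetP (subset_force_step S) w wS.
Qed.

Lemma subset_iter_force_step S m n : m <= n ->
  iter m (force_step e) S \subset iter n (force_step e) S.
Proof.
move/subnK <-; elim: (n - m) => [|d IH] //; rewrite addSn /=.
exact: subset_trans IH (subset_force_step _).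
Qed.

Lemma iter_force_stepS S P Q m : P \subset iter m (force_step e) S ->
  Q \subset force_step e P -> Q \subset iter m.+1 (force_step e) S.
Proof. by move=> sP sQ; apply: subset_trans sQ _; exact: force_step_mono sP. Qed.

Lemma zero_forcing_set_iter S m : m <= #|T| ->
  [set: T] \subset iter m (force_step e) S -> zero_forcing_set e S.
Proof.
move=> le_m_T sTS; rewrite /zero_forcing_set /force_closure eqEsubset subsetT /=.
exact: subset_trans sTS (subset_iter_force_step S le_m_T).
Qed.

Lemma zero_forcing_number_le S : zero_forcing_set e S -> zero_forcing_number e <= #|S|.
Proof.
by move=> zS; rewrite /zero_forcing_number -minEnat; apply: (bigmin_le_cond (T := nat)).
Qed.

End ZeroForcing.

Lemma card_set_sum (A B : finType) (p : pred (A + B)) :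
  #|[set x | p x]| = #|[set a | p (inl a)]| + #|[set b | p (inr b)]|.
Proof. by rewrite -!sum1dep_card big_sumType. Qed.

Lemma card_ord_interval n a b : #|[set i : 'I_n | a <= i < b]| = minn n b - a.
Proof.
rewrite -sum1dep_card big_mkcond /=.
elim: n => [|n IH]; first by rewrite big_ord0; lia.
by rewrite big_ord_recr /= IH; case: ifP; lia.
Qed.

Lemma leq_card_ord_intervalU n a b c d :
  #|[set i : 'I_n | (a <= i < b) || (c <= i < d)]| <= (b - a) + (d - c).
Proof.
have -> : [set i : 'I_n | (a <= i < b) || (c <= i < d)] =
          [set i : 'I_n | a <= i < b] :|: [set i : 'I_n | c <= i < d].
  by apply/setP => i; rewrite !inE.
rewrite cardsU !card_ord_interval; lia.
Qed.

Lemma modn_shift_sub n i j : i < n -> j < n ->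
  (j + n - i) %% n = if i <= j then j - i else j + n - i.
Proof.
move=> lt_i_n lt_j_n; case: leqP => [le_ij | lt_ji]; last by rewrite modn_small; lia.
by rewrite -addnBAC // modnDr modn_small //; lia.
Qed.

Lemma adjG_HH k (i j : 'I_(3 * k - 1)) :
  adjG k (inl i) (inl j) =
  ((i <= j) && (k <= j - i <= 2 * k - 1)) || ((j < i) && (k <= i - j <= 2 * k - 1)).
Proof.
have := ltn_ord i; have := ltn_ord j; rewrite /adjG /= !modn_shift_sub //.
case: (leqP i j) => ? ; case: (leqP j i) => ? /=; lia.
Qed.

Lemma adjG_AA k (i j : 'I_k.+1) :
  adjG k (inr (inl i)) (inr (inl j)) = (i != j :> nat).
Proof. by rewrite /adjG /= [j == i]eq_sym orbb. Qed.

Lemma card_vert k : 0 < k -> #|vert k| = 6 * k.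
Proof. by move=> k_gt0; rewrite !card_sum !card_ord; lia. Qed.

Ltac adj_simpl := rewrite ?/adjG' ?/gm_switch ?inE /= ?adjG_HH ?adjG_AA /adjG /=.

Ltac same_vertex := first
  [ exfalso; lia | do ?congr (inr _); try congr (inl _); apply: val_inj => /=; lia ].

Ltac forced_by v :=
  exists v; split;
  [ rewrite inE /=; lia
  | adj_simpl; lia
  | let u := fresh "u" in
    case=> [u|[u|[u|u]]]; have := ltn_ord u; adj_simpl; move=> ? ? ?; same_vertex ].

Section ForcingG.
Variables (k : nat) (hk : 2 <= k).

Definition forcing_setG : {set vert k} := [set x : vert k | match x with
  | inl j => (1 <= j < k) || (2 * k - 1 <= j < 2 * k)
  | inr (inl i) => 1 <= i < k.+1
  | inr (inr (inl i)) => 0 <= i < k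
  | inr (inr (inr i)) => 0 <= i < k - 2
  end].

Definition blueG1 : {set vert k} := [set x : vert k | match x with
  | inl j => (j < k) || (j == 2 * k - 1 :> nat)
  | inr (inl _) => true
  | inr (inr (inl i)) => i < k
  | inr (inr (inr i)) => i < k - 2
  end].

Definition blueG t : {set vert k} := [set x : vert k | match x with
  | inl j => j <= 2 * k - 1 + t
  | inr (inr (inr i)) => (i < k - 2) || (0 < t)
  | _ => true
  end].

Lemma card_forcing_setG : #|forcing_setG| <= 4 * k - 2.
Proof.
rewrite !card_set_sum.
have := leq_card_ord_intervalU (3 * k - 1) 1 k (2 * k - 1) (2 * k).
have := card_ord_interval k.+1 1 k.+1.
have := card_ord_interval k.+1 0 k.
have := card_ord_interval (k - 1) 0 (k - 2).
rewrite /=; lia.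
Qed.

Lemma blueG1_forced : blueG1 \subset force_step (adjG k) forcing_setG.
Proof.
apply: sub_force_step => -[j|[j|[j|j]]]; have := ltn_ord j; rewrite !inE /= => ? ? ?.
- forced_by (inr (inr (inl ord0)) : vert k).
- forced_by (inr (inl ord_max) : vert k).
- exfalso; lia.
- exfalso; lia.
Qed.

Lemma blueG0_forced : blueG 0 \subset force_step (adjG k) blueG1.
Proof.
apply: sub_force_step => -[j|[j|[j|j]]]; have := ltn_ord j; rewrite !inE /= => ? ? ?.
- have lt_b : j - k + 1 < k.+1 by lia.
  forced_by (inr (inr (inl (Ordinal lt_b))) : vert k).
- exfalso; lia.
- forced_by (inr (inl ord0) : vert k).
- exfalso; lia.
Qed.

Lemma blueGS_forced t : t < k - 1 -> blueG t.+1 \subset force_step (adjG k) (blueG t).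
Proof.
move=> lt_t; apply: sub_force_step => -[j|[j|[j|j]]]; have := ltn_ord j;
  rewrite !inE /= => ? ? ?.
- have lt_h : t.+1 < 3 * k - 1 by lia.
  forced_by (inl (Ordinal lt_h) : vert k).
- exfalso; lia.
- exfalso; lia.
- have lt_h : 0 < 3 * k - 1 by lia.
  forced_by (inl (Ordinal lt_h) : vert k).
Qed.

Lemma blueG_iter t : t <= k - 1 ->
  blueG t \subset iter t.+2 (force_step (adjG k)) forcing_setG.
Proof.
elim: t => [_ | t IH lt_t].
  have blue1 : blueG1 \subset iter 1 (force_step (adjG k)) forcing_setG := blueG1_forced.
  exact: iter_force_stepS blue1 blueG0_forced.
exact: iter_force_stepS (IH (ltnW lt_t)) (blueGS_forced lt_t).
Qed.

Lemma zero_forcing_setG : zero_forcing_set (adjG k) forcing_setG.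
Proof.
apply: (@zero_forcing_set_iter _ _ _ (k - 1).+2); first by rewrite card_vert; lia.
apply: subset_trans (blueG_iter (leqnn _)).
by apply/subsetP => -[j|[j|[j|j]]] _; have := ltn_ord j; rewrite inE /=; lia.
Qed.

End ForcingG.

Section ForcingG'.
Variables (k : nat) (hk : 2 <= k).

Definition forcing_setG' : {set vert k} := [set x : vert k | match x with
  | inl j => (1 <= j < k - 1) || (k <= j < 2 * k - 1)
  | inr (inr (inl _)) => false
  | _ => true
  end].

Definition blueG'1 : {set vert k} := [set x : vert k | match x with
  | inl j => 1 <= j <= 2 * k - 2
  | _ => true
  end].

Definition blueG' t : {set vert k} := [set x : vert k | match x with
  | inl j => j <= 2 * k - 2 + t
  | _ => true
  end].

Lemma card_forcing_setG' : #|forcing_setG'| <= 4 * k - 3.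
Proof.
rewrite !card_set_sum /= cards0 !cardsT !card_ord.
have := leq_card_ord_intervalU (3 * k - 1) 1 (k - 1) k (2 * k - 1).
rewrite /=; lia.
Qed.

Lemma blueG'1_forced : blueG'1 \subset force_step (adjG' k) forcing_setG'.
Proof.
apply: sub_force_step => -[j|[j|[j|j]]]; have := ltn_ord j; rewrite !inE /= => ? ? ?.
- have lt_c : 0 < k - 1 by lia.
  forced_by (inr (inr (inr (Ordinal lt_c))) : vert k).
- exfalso; lia.
- forced_by (inr (inl j) : vert k).
- exfalso; lia.
Qed.

Lemma blueG'0_forced : blueG' 0 \subset force_step (adjG' k) blueG'1.
Proof.
apply: sub_force_step => -[j|[j|[j|j]]]; have := ltn_ord j; rewrite !inE /= => ? ? ?.
- forced_by (inr (inr (inl ord_max)) : vert k).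
- exfalso; lia.
- exfalso; lia.
- exfalso; lia.
Qed.

Lemma blueG'S_forced t : t < k -> blueG' t.+1 \subset force_step (adjG' k) (blueG' t).
Proof.
move=> lt_t; apply: sub_force_step => -[j|[j|[j|j]]]; have := ltn_ord j;
  rewrite !inE /= => ? ? ?.
- have lt_h : t < 3 * k - 1 by lia.
  forced_by (inl (Ordinal lt_h) : vert k).
- exfalso; lia.
- exfalso; lia.
- exfalso; lia.
Qed.

Lemma blueG'_iter t : t <= k ->
  blueG' t \subset iter t.+2 (force_step (adjG' k)) forcing_setG'.
Proof.
elim: t => [_ | t IH lt_t].
  have blue1 : blueG'1 \subset iter 1 (force_step (adjG' k)) forcing_setG' := blueG'1_forced.
  exact: iter_force_stepS blue1 blueG'0_forced.
exact: iter_force_stepS (IH (ltnW lt_t)) (blueG'S_forced lt_t).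
Qed.

Lemma zero_forcing_setG' : zero_forcing_set (adjG' k) forcing_setG'.
Proof.
apply: (@zero_forcing_set_iter _ _ _ k.+2); first by rewrite card_vert; lia.
apply: subset_trans (blueG'_iter (leqnn _)).
by apply/subsetP => -[j|[j|[j|j]]] _; have := ltn_ord j; rewrite inE /=; lia.
Qed.

End ForcingG'.

Theorem lemma5p7 (k : nat) (hk : 2 <= k) :
  zero_forcing_number (adjG k) <= 4 * k - 2 /\
  zero_forcing_number (adjG' k) <= 4 * k - 3.
Proof.
split.
- exact: leq_trans (zero_forcing_number_le (zero_forcing_setG hk)) (card_forcing_setG hk).
- exact: leq_trans (zero_forcing_number_le (zero_forcing_setG' hk)) (card_forcing_setG' hk).
Qed.
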